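(* Let $F_t$, $t\in[0,1]$, be a one-parameter family on a complete metric space $(\mathbb X,d)$ satisfying (H1) and (H2). If $A^\bullet$ is any upper transition attractor of $F_t$, then (i) $F_1(A^\bullet)=A^\bullet$. If in addition $F_t$ satisfies (H3), then (ii) $Q\subseteq A^\bullet$, and in particular $A_\bullet\subseteq A^\bullet$, where $A_\bullet$ is the lower transition attractor.
   Context: Let $(\mathbb X,d)$ be a complete metric space. A one-parameter family is $F_t=\{f_{(1,t)},\dots,f_{(N,t)}\}$, $t\in[0,1]$, $N\ge2$, of continuous self-maps of $\mathbb X$. $\mathrm{Lip}(f,d)=\sup_{x\ne y}d(f(x),f(y))/d(x,y)$ and $\mathrm{Lip}(F_t,d)=\max_i\mathrm{Lip}(f_{(i,t)},d)$. Conditions: (H1) for every $x\in\mathbb X$ and every $i$, the map $t\mapsto f_{(i,t)}(x)$ is continuous on $[0,1]$; (H2) $\mathrm{Lip}(F_t,d)<1$ for all $t\in[0,1)$; (H3) for each $i$ the limit $q_i=\lim_{t\to1^-}q_{i,t}$ exists, where $q_{i,t}$ is the unique fixed point of $f_{(i,t)}$ for $t\in[0,1)$; $Q=\{q_1,\dots,q_N\}$. For an IFS $F$ and $S\subseteq\mathbb X$, $F(S)=\overline{\bigcup_{f\in F}f(S)}$. For $t\in[0,1)$, $A_t$ is the attractor of $F_t$, the unique nonempty compact set with $F_t(A_t)=A_t$. With $h$ the Hausdorff metric, an upper transition attractor is a compact set $A^\bullet$ for which there is an increasing sequence $t_n\in[0,1)$, $t_n\to1$, with $h(A_{t_n},A^\bullet)\to0$.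 The lower transition attractor is the smallest (w.r.t. inclusion) set $A_\bullet$ with $F_1(A_\bullet)=A_\bullet$ and $Q\subseteq A_\bullet$. *)

From HB Require Import structures.
From mathcomp Require Import all_boot all_order all_algebra.
From mathcomp Require Import all_classical all_reals all_analysis.
Set Implicit Arguments. Unset Strict Implicit. Unset Printing Implicit Defensive.
Import Order.TTheory GRing.Theory Num.Theory numFieldNormedType.Exports.
Local Open Scope classical_set_scope.
Local Open Scope ring_scope.

Section Defs.
Context {R : realType} {X : Type} (d : X -> X -> R).

Definition is_metric : Prop :=
  [/\ forall x y, 0 <= d x y,
      forall x y, d x y = 0 <-> x = y,
      forall x y, d x y = d y x
    & forall x y z, d x z <= d x y + d y z].

Definition cauchy_seq (u : nat -> X) : Prop :=
  forall e : R, 0 < e -> exists M : nat,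
    forall m n, (M <= m)%N -> (M <= n)%N -> d (u m) (u n) < e.

Definition converges_to (u : nat -> X) (l : X) : Prop :=
  forall e : R, 0 < e -> exists M : nat, forall n, (M <= n)%N -> d (u n) l < e.

Definition complete_metric : Prop :=
  forall u, cauchy_seq u -> exists l, converges_to u l.

Definition dopen (U : set X) : Prop :=
  forall x, U x -> exists r : R, 0 < r /\ forall y, d x y < r -> U y.

Definition dcompact (K : set X) : Prop :=
  forall (I : Type) (U : I -> set X), (forall i, dopen (U i)) ->
    K `<=` \bigcup_(i in [set: I]) U i ->
    exists F : set I, finite_set F /\ K `<=` \bigcup_(i in F) U i.

Definition dclosure (S : set X) : set X :=
  [set x | forall e : R, 0 < e -> exists2 y, S y & d x y < e].

Definition dcontinuous (g : X -> X) : Prop :=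
  forall x (e : R), 0 < e -> exists2 del : R, 0 < del &
    forall y, d x y < del -> d (g x) (g y) < e.

Definition Lip (g : X -> X) : \bar R :=
  ereal_sup [set r | exists x y, x <> y /\ r = ((d (g x) (g y)) / d x y)%:E].

Definition LipF (N : nat) (F : 'I_N -> X -> X) : \bar R :=
  \big[maxe/-oo%E]_(i < N) Lip (F i).

Definition IFS_img (N : nat) (F : 'I_N -> X -> X) (S : set X) : set X :=
  dclosure (\bigcup_(i in [set: 'I_N]) (F i @` S)).

(** Hausdorff distance (used on nonempty compact sets) *)
Definition dist_set (x : X) (B : set X) : R := inf [set d x b | b in B].
Definition hdist (A B : set X) : R :=
  Num.max (sup [set dist_set a B | a in A]) (sup [set dist_set b A | b in B]).

(** H1 for a single path t |-> g t, continuity on [0,1] *)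
Definition path_continuous01 (g : R -> X) : Prop :=
  forall t : R, 0 <= t <= 1 -> forall e : R, 0 < e -> exists2 del : R, 0 < del &
    forall s : R, 0 <= s <= 1 -> `|s - t| < del -> d (g s) (g t) < e.

Definition left_limit_at1 (g : R -> X) (l : X) : Prop :=
  forall e : R, 0 < e -> exists2 del : R, 0 < del &
    forall t : R, 1 - del < t < 1 -> d (g t) l < e.

Definition upper_transition_attractor (A : R -> set X) (Aup : set X) : Prop :=
  [/\ dcompact Aup, Aup !=set0 &
      exists tn : nat -> R,
        [/\ forall n, 0 <= tn n < 1,
            forall n, tn n < tn n.+1,
            tn @ \oo --> (1 : R)
          & (fun n => hdist (A (tn n)) Aup) @ \oo --> (0 : R)]].

Definition lower_transition_attractor (N : nat) (F1 : 'I_N -> X -> X)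
    (Q : set X) (S : set X) : Prop :=
  [/\ IFS_img F1 S = S, Q `<=` S &
      forall T, IFS_img F1 T = T -> Q `<=` T -> S `<=` T].

End Defs.

From HB Require Import structures.
From mathcomp Require Import all_boot all_order all_algebra.
From mathcomp Require Import all_classical all_reals all_analysis.
From mathcomp Require Import lra.
Import Order.TTheory GRing.Theory Num.Theory numFieldNormedType.Exports.
Local Open Scope classical_set_scope.
Local Open Scope ring_scope.

(* Along a sequence t_n -> 1 with A_(t_n) -> Aup in the Hausdorff metric, the maps
   f_(i,t_n) are nonexpansive (their Lipschitz constants are < 1) and converge pointwise
   to f_(i,1).  Nonexpansiveness makes this convergence uniform on the compact set Aup,
   which suffices to pass to the limit in F_(t_n)(A_(t_n)) = A_(t_n).  For (ii), the fixed
   point q_(i,t) of the contraction f_(i,t) lies in A_t, and a Hausdorff limit of compact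
   sets contains every limit of points taken in these sets. *)

Definition nonexpansive {R : realType} {X : Type} (d : X -> X -> R) (g : X -> X) :=
  forall x y, d (g x) (g y) <= d x y.

Definition hausdorff_close {R : realType} {X : Type} (d : X -> X -> R)
    (K L : set X) (e : R) :=
  (forall k, K k -> exists2 l, L l & d k l < e) /\
  (forall l, L l -> exists2 k, K k & d l k < e).

Section Metric.
Context {R : realType} {X : Type} {d : X -> X -> R} (dm : is_metric d).

Lemma dist_ge0 x y : 0 <= d x y. Proof. by case: dm. Qed.
Lemma distxx x : d x x = 0. Proof. by case: dm => _ dP _ _; apply/dP. Qed.
Lemma distC x y : d x y = d y x. Proof. by case: dm. Qed.
Lemma dist_triangle x y z : d x z <= d x y + d y z. Proof. by case: dm. Qed.

Lemma dist_gt0 x y : x <> y -> 0 < d x y.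
Proof.
move=> xy; rewrite lt_neqAle dist_ge0 andbT; apply/eqP => dxy0.
by case: dm => _ dP _ _; apply/xy/dP.
Qed.

Lemma converges_toP (u : nat -> X) l :
  converges_to d u l <-> forall e, 0 < e -> \forall n \near \oo, d (u n) l < e.
Proof.
split=> cvg e /cvg; first by case=> M HM; exists M.
by case=> M _ HM; exists M.
Qed.

Lemma dcompact_nested_cover K (U : nat -> set X) : dcompact d K ->
  (forall k, dopen d (U k)) -> {homo U : k l / (k <= l)%N >-> k `<=` l} ->
  K `<=` \bigcup_k U k -> exists k, K `<=` U k.
Proof.
move=> cK oU mU /(cK nat U oU)[_ [/finite_fsetP[S ->] KS]].
exists (\max_(k <- finmap.enum_fset S) k)%N => x /KS[k Sk]; apply: mU.
exact: leq_bigmax_seq.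
Qed.

Lemma dcompact_closed {K : set X} : dcompact d K -> dclosure d K `<=` K.
Proof.
move=> cK x Kx; apply: contrapT => nKx.
pose U k := [set y | k.+1%:R^-1 < d x y].
have [k KU] : exists k, K `<=` U k.
  apply: dcompact_nested_cover => //.
  - move=> k; rewrite /dopen /U /=; move: k.+1%:R^-1 => r y ry.
    exists (d x y - r); split; first by rewrite subr_gt0.
    by move=> z yz; have := dist_triangle x z y; rewrite (distC z y); lra.
  - by move=> k l kl y; apply: le_lt_trans; rewrite lef_pV2 ?posrE// ler_nat.
  - move=> y Ky; have dxy : 0 < d x y.
      by apply: dist_gt0 => xy; apply: nKx; rewrite xy.
    exists (Num.truncn (d x y)^-1) => //.
    rewrite /U /= -[ltRHS]invrK ltf_pV2 ?posrE ?invr_gt0//; exact: truncnS_gt.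
have [y Ky] := Kx k.+1%:R^-1 ltac:(by rewrite invr_gt0).
by move/(lt_trans (KU _ Ky)); rewrite ltxx.
Qed.

Lemma dcompact_bounded {K : set X} x :
  dcompact d K -> exists M, forall y, K y -> d x y <= M.
Proof.
move=> cK; pose U k := [set y | d x y < k%:R].
have [k KU] : exists k, K `<=` U k.
  apply: dcompact_nested_cover => //.
  - move=> k y Uy; exists (k%:R - d x y); split; first by rewrite subr_gt0.
    by move=> z yz; have := dist_triangle x y z; rewrite /U /=; lra.
  - by move=> k l kl y /lt_le_trans; apply; rewrite ler_nat.
  - by move=> y _; exists (Num.truncn (d x y)).+1 => //; exact: truncnS_gt.
by exists k%:R => y /KU /ltW.
Qed.

Lemma Lip_lt1_contraction {g : X -> X} : (Lip d g < 1%:E)%E ->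
  exists2 c : R, 0 <= c < 1 & forall x y, d (g x) (g y) <= c * d x y.
Proof.
have ratio_le x y : x <> y -> ((d (g x) (g y) / d x y)%:E <= Lip d g)%E.
  by move=> xy; apply: ereal_sup_ubound; exists x, y.
case: (Lip d g) ratio_le => [r||] ratio_le Lg1.
- rewrite lte_fin in Lg1; exists (Num.max 0 r).
    by rewrite le_max lexx /= gt_max ltr01.
  move=> x y; have [->|xy] := pselect (x = y); first by rewrite !distxx mulr0.
  have := ratio_le _ _ xy; rewrite lee_fin ler_pdivrMr ?dist_gt0// => /le_trans; apply.
  by rewrite ler_wpM2r ?dist_ge0// le_max lexx orbT.
- by move: Lg1; rewrite ltNge leey.
- exists 0; first by rewrite lexx ltr01.
  move=> x y; have [->|xy] := pselect (x = y); first by rewrite !distxx mulr0.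
  by have := ratio_le _ _ xy; rewrite leeNy_eq.
Qed.

Lemma Lip_le_LipF {N} (F : 'I_N -> X -> X) i : (Lip d (F i) <= LipF d F)%E.
Proof. exact: le_bigmax. Qed.

Lemma LipF_lt1_nonexpansive {N} {F : 'I_N -> X -> X} i :
  (LipF d F < 1%:E)%E -> nonexpansive d (F i).
Proof.
move=> /(le_lt_trans (Lip_le_LipF F i))/Lip_lt1_contraction[c /andP[c0 c1] Fc] x y.
by apply: le_trans (Fc x y) _; rewrite ler_piMl ?dist_ge0// ltW.
Qed.

(* The fixed point is the limit of the iterates of any point of K. *)
Lemma contraction_fixpoint_mem {K : set X} {g : X -> X} {c : R} {p : X} :
  dcompact d K -> K !=set0 -> 0 <= c < 1 ->
  (forall x y, d (g x) (g y) <= c * d x y) -> (forall a, K a -> K (g a)) ->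
  g p = p -> K p.
Proof.
move=> cK [a Ka] /andP[c0 c1] gc gK gp.
have iterK n : K (iter n g a) by elim: n => //= n /gK.
have iter_dist n : d (iter n g a) p <= c ^+ n * d a p.
  elim: n => [|n IH] /=; first by rewrite expr0 mul1r.
  rewrite -{1}gp exprS -mulrA; apply: le_trans (gc _ _) _; exact: ler_wpM2l.
apply: (dcompact_closed cK) => e e0.
have e' : 0 < e / (d a p + 1) by rewrite divr_gt0// ltr_wpDl ?dist_ge0.
have cn1 : `|c| < 1 by rewrite ger0_norm.
have : \forall n \near \oo, c ^+ n < e / (d a p + 1).
  apply: filterS ((cvgrPdist_lt _ _).1 (cvg_expr cn1) _ e') => n.
  by rewrite sub0r normrN ger0_norm ?exprn_ge0.
case=> M _ /(_ M (leqnn M)) cM; exists (iter M g a) => //; rewrite distC.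
apply: le_lt_trans (iter_dist M) _; move: cM.
rewrite ltr_pdivlMr ?ltr_wpDl ?dist_ge0//; have := dist_ge0 a p.
have := exprn_ge0 M c0; nra.
Qed.

Lemma IFS_img_stable {N} {F : 'I_N -> X -> X} {S : set X} i {a : X} :
  IFS_img d F S = S -> S a -> S (F i a).
Proof.
move=> FS Sa; rewrite -FS => e e0; exists (F i a); last by rewrite distxx.
by exists i => //; exists a.
Qed.

Lemma IFS_img_approx {N} {F : 'I_N -> X -> X} {S : set X} {x : X} {e : R} :
  IFS_img d F S = S -> S x -> 0 < e -> exists i, exists2 c, S c & d x (F i c) < e.
Proof.
move=> FS; rewrite -{1}FS => /[apply][[_ [i _ [c Sc <-]] xc]].
by exists i, c.
Qed.

Lemma IFS_fixpoint_mem {N} {F : 'I_N -> X -> X} {K : set X} {p : X} i :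
  (LipF d F < 1%:E)%E -> dcompact d K -> K !=set0 -> IFS_img d F K = K ->
  F i p = p -> K p.
Proof.
move=> /(le_lt_trans (Lip_le_LipF F i))/Lip_lt1_contraction[c c01 Fc] cK nK FK.
exact: (contraction_fixpoint_mem cK nK c01 Fc (fun a => IFS_img_stable i FK)).
Qed.

Lemma dist_set_le x {B : set X} {b : X} : B b -> dist_set d x B <= d x b.
Proof.
move=> Bb; apply: ge_inf; last by exists b.
by exists 0 => _ [y _ <-]; exact: dist_ge0.
Qed.

Lemma sup_dist_set_lt K L e k : dcompact d K -> L !=set0 ->
  sup [set dist_set d a L | a in K] < e -> K k -> exists2 l, L l & d k l < e.
Proof.
move=> cK [l0 Ll0] supKL Kk.
have [M KM] := dcompact_bounded l0 cK.
have ubKL : has_ubound [set dist_set d a L | a in K].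
  exists M => _ [a Ka <-]; apply: le_trans (dist_set_le a Ll0) _.
  by rewrite distC; exact: KM.
have kL : dist_set d k L < e.
  by apply: le_lt_trans supKL; apply: ub_le_sup => //; exists k.
have [_ [l Ll <-]] := inf_lt (ex_intro _ (d k l0) (ex_intro2 _ _ l0 Ll0 erefl)) kL.
by exists l.
Qed.

Lemma hdist_lt_close K L e : dcompact d K -> dcompact d L -> K !=set0 -> L !=set0 ->
  hdist d K L < e -> hausdorff_close d K L e.
Proof.
move=> cK cL nK nL; rewrite /hdist gt_max => /andP[KL LK]; split => x.
  exact: sup_dist_set_lt KL.
exact: sup_dist_set_lt LK.
Qed.

Section NonexpansiveLimit.
Context {g_ : nat -> X -> X} {g : X -> X}.
Hypothesis g_nonexpansive : forall n, nonexpansive d (g_ n).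
Hypothesis g_cvg : forall x, converges_to d (g_ ^~ x) (g x).

Lemma nonexpansive_limit : nonexpansive d g.
Proof.
move=> x y; apply/ler_addgt0Pr => e e0.
have e2 : 0 < e / 2 by rewrite divr_gt0.
have g_near z := (converges_toP _ _).1 (g_cvg z) _ e2.
near \oo => n.
have gx : d (g_ n x) (g x) < e / 2 by near: n; exact: g_near.
have gy : d (g_ n y) (g y) < e / 2 by near: n; exact: g_near.
have := dist_triangle (g x) (g_ n x) (g y).
have := dist_triangle (g_ n x) (g_ n y) (g y).
have := g_nonexpansive n x y; rewrite (distC (g x) (g_ n x)); lra.
Unshelve. all: by end_near.
Qed.

(* Pointwise convergence of nonexpansive maps is uniform on compact sets:
   cover K by the balls around points where convergence has happened by time M. *)
Lemma nonexpansive_cvg_uniform {K : set X} {e : R} : dcompact d K -> 0 < e ->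
  \forall n \near \oo, forall x, K x -> d (g_ n x) (g x) < e.
Proof.
move=> cK e0; have e3 : 0 < e / 3 by rewrite divr_gt0.
pose U M := [set z | exists2 y,
  (forall n, (M <= n)%N -> d (g_ n y) (g y) < e / 3) & d y z < e / 3].
have [M KU] : exists M, K `<=` U M.
  apply: dcompact_nested_cover => //.
  - move=> M z [y yM yz]; exists (e / 3 - d y z); split; first by rewrite subr_gt0.
    by move=> w zw; exists y => //; have := dist_triangle y z w; lra.
  - by move=> M M' MM' z [y yM yz]; exists y => // n /(leq_trans MM'); exact: yM.
  - by move=> z _; have [M zM] := g_cvg z _ e3; exists M => //; exists z; rewrite ?distxx.
exists M => // n /= Mn x /KU[y /(_ n Mn) yn yx].
have := nonexpansive_limit y x; have := g_nonexpansive n x y.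
have := dist_triangle (g_ n x) (g_ n y) (g x).
have := dist_triangle (g_ n y) (g y) (g x).
rewrite (distC x y); lra.
Qed.

End NonexpansiveLimit.

Lemma path_continuous01_cvg (p : R -> X) (t_ : nat -> R) :
  path_continuous01 d p -> (forall n, 0 <= t_ n <= 1) -> t_ n @[n --> \oo] --> (1 : R) ->
  converges_to d (p \o t_) (p 1).
Proof.
move=> pc t01 t1; apply/converges_toP => e e0.
have [del del0 pdel] := pc 1 ltac:(by rewrite ler01 lexx) e e0.
apply: filterS ((cvgrPdist_lt _ _).1 t1 _ del0) => n t1n.
by apply: pdel; rewrite // distrC.
Qed.

Lemma left_limit_at1_cvg (p : R -> X) l (t_ : nat -> R) :
  left_limit_at1 d p l -> (forall n, t_ n < 1) -> t_ n @[n --> \oo] --> (1 : R) ->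
  converges_to d (p \o t_) l.
Proof.
move=> pl t1 t_1; apply/converges_toP => e e0.
have [del del0 pdel] := pl e e0.
apply: filterS ((cvgrPdist_lt _ _).1 t_1 _ del0) => n t1n.
apply: pdel; rewrite t1 andbT.
by have := ler_norm (1 - t_ n); lra.
Qed.

Section HausdorffLimit.
Context {A_ : nat -> set X} {B : set X}.
Hypothesis A_compact : forall n, dcompact d (A_ n).
Hypothesis A_neq0 : forall n, A_ n !=set0.
Hypothesis B_compact : dcompact d B.
Hypothesis B_neq0 : B !=set0.
Hypothesis hdist_cvg0 : hdist d (A_ n) B @[n --> \oo] --> 0.

Lemma hdist_cvg0_close e : 0 < e -> \forall n \near \oo, hausdorff_close d (A_ n) B e.
Proof.
move=> e0; apply: filterS ((cvgrPdist_lt _ _).1 hdist_cvg0 _ e0) => n.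
rewrite sub0r normrN => /(le_lt_trans (ler_norm _)).
exact: hdist_lt_close.
Qed.

Lemma hausdorff_limit_mem {a_ : nat -> X} {a : X} :
  (forall n, A_ n (a_ n)) -> converges_to d a_ a -> B a.
Proof.
move=> Aa /converges_toP aa; apply: (dcompact_closed B_compact) => e e0.
have e2 : 0 < e / 2 by rewrite divr_gt0.
near \oo => n.
have [/(_ _ (Aa n))[b Bb ab] _] : hausdorff_close d (A_ n) B (e / 2).
  by near: n; exact: hdist_cvg0_close.
have an : d (a_ n) a < e / 2 by near: n; exact: aa.
exists b => //; have := dist_triangle a (a_ n) b; rewrite (distC a (a_ n)); lra.
Unshelve. all: by end_near.
Qed.

Context {N : nat} {F_ : nat -> 'I_N -> X -> X} {F : 'I_N -> X -> X}.
Hypothesis F_nonexpansive : forall n i, nonexpansive d (F_ n i).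
Hypothesis F_cvg : forall i x, converges_to d (fun n => F_ n i x) (F i x).
Hypothesis A_invariant : forall n, IFS_img d (F_ n) (A_ n) = A_ n.

Lemma IFS_img_hausdorff_limit_sub : IFS_img d F B `<=` B.
Proof.
move=> x FBx; apply: (dcompact_closed B_compact) => e e0.
have e4 : 0 < e / 4 by rewrite divr_gt0.
have [_ [i _ [b Bb <-]] xFb] := FBx _ e4.
near \oo => n.
have [AB BA] : hausdorff_close d (A_ n) B (e / 4) by near: n; exact: hdist_cvg0_close.
have [a Aa ba] := BA _ Bb.
have [b' Bb' ab'] := AB _ (IFS_img_stable i (A_invariant n) Aa).
have Fb : d (F_ n i b) (F i b) < e / 4.
  by near: n; exact: (converges_toP _ _).1 (F_cvg i b) _ e4.
exists b' => //.
have := F_nonexpansive n i b a; have := dist_triangle x (F i b) b'.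
have := dist_triangle (F i b) (F_ n i b) b'.
have := dist_triangle (F_ n i b) (F_ n i a) b'.
rewrite (distC (F i b) (F_ n i b)); lra.
Unshelve. all: by end_near.
Qed.

Lemma IFS_img_hausdorff_limit_sup : B `<=` IFS_img d F B.
Proof.
move=> x Bx e e0; have e4 : 0 < e / 4 by rewrite divr_gt0.
have F_unif : \forall n \near \oo, forall i b, B b -> d (F_ n i b) (F i b) < e / 4.
  apply: filter_forall => i.
  exact: (nonexpansive_cvg_uniform (F_nonexpansive ^~ i) (F_cvg i) B_compact e4).
near \oo => n.
have [AB BA] : hausdorff_close d (A_ n) B (e / 4) by near: n; exact: hdist_cvg0_close.
have Fn : forall i b, B b -> d (F_ n i b) (F i b) < e / 4 by near: n; exact: F_unif.
have [a Aa xa] := BA _ Bx.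
have [i [c Ac ac]] := IFS_img_approx (A_invariant n) Aa e4.
have [b Bb cb] := AB _ Ac.
have Fb := Fn i b Bb.
exists (F i b); first by exists i => //; exists b.
have := F_nonexpansive n i c b; have := dist_triangle x a (F i b).
have := dist_triangle a (F_ n i c) (F i b).
have := dist_triangle (F_ n i c) (F_ n i b) (F i b); lra.
Unshelve. all: by end_near.
Qed.

Lemma IFS_img_hausdorff_limit : IFS_img d F B = B.
Proof.
by apply/seteqP; split;
  [exact: IFS_img_hausdorff_limit_sub | exact: IFS_img_hausdorff_limit_sup].
Qed.

End HausdorffLimit.

End Metric.

Theorem mainTheorem8 (R : realType) (X : Type) (d : X -> X -> R) (N : nat)
    (f : 'I_N -> R -> X -> X) (A : R -> set X) (Aup : set X) :
  is_metric d -> complete_metric d -> (2 <= N)%N ->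
  (* each f_(i,t) is a continuous self-map *)
  (forall i (t : R), 0 <= t <= 1 -> dcontinuous d (f i t)) ->
  (* (H1) *)
  (forall i x, path_continuous01 d (fun t => f i t x)) ->
  (* (H2) *)
  (forall t : R, 0 <= t < 1 -> (LipF d (fun i => f i t) < 1%:E)%E) ->
  (* A t is the attractor of F_t for t in [0,1) *)
  (forall t : R, 0 <= t < 1 ->
     [/\ A t !=set0, dcompact d (A t) & IFS_img d (fun i => f i t) (A t) = A t]) ->
  upper_transition_attractor d A Aup ->
  (* (i) *)
  IFS_img d (fun i => f i 1) Aup = Aup /\
  (* under (H3): (ii) *)
  (forall (qt : 'I_N -> R -> X) (q : 'I_N -> X),
     (forall i (t : R), 0 <= t < 1 -> f i t (qt i t) = qt i t) ->
     (forall i, left_limit_at1 d (qt i) (q i)) ->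
     [set q i | i in [set: 'I_N]] `<=` Aup /\
     (forall S, lower_transition_attractor d (fun i => f i 1)
                   [set q i | i in [set: 'I_N]] S -> S `<=` Aup)).
Proof.
move=> dm _ _ _ H1 H2 HA [Aup_compact Aup_neq0 [t_ [t01 _ t_1 hdist_cvg0]]].
have A_compact n : dcompact d (A (t_ n)) by have [] := HA _ (t01 n).
have A_neq0 n : A (t_ n) !=set0 by have [] := HA _ (t01 n).
have A_invariant n : IFS_img d (fun i => f i (t_ n)) (A (t_ n)) = A (t_ n).
  by have [] := HA _ (t01 n).
have F_nonexpansive n i : nonexpansive d (f i (t_ n)).
  exact: (LipF_lt1_nonexpansive dm i (H2 _ (t01 n))).
have F_cvg i x : converges_to d (fun n => f i (t_ n) x) (f i 1 x).
  by apply: path_continuous01_cvg (H1 i x) _ t_1 => n; have /andP[-> /ltW] := t01 n.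
have Aup_invariant : IFS_img d (fun i => f i 1) Aup = Aup.
  exact (IFS_img_hausdorff_limit dm A_compact A_neq0 Aup_compact Aup_neq0
    hdist_cvg0 F_nonexpansive F_cvg A_invariant).
split=> // qt q qt_fix qt_cvg.
have Q_sub : [set q i | i in [set: 'I_N]] `<=` Aup.
  move=> _ [i _ <-].
  have qt_mem n : A (t_ n) (qt i (t_ n)).
    exact: (IFS_fixpoint_mem dm i (H2 _ (t01 n)) (A_compact n) (A_neq0 n)
      (A_invariant n) (qt_fix i _ (t01 n))).
  have qt_q : converges_to d (fun n => qt i (t_ n)) (q i).
    by apply: left_limit_at1_cvg (qt_cvg i) _ t_1 => n; have /andP[] := t01 n.
  exact: (hausdorff_limit_mem dm A_compact A_neq0 Aup_compact Aup_neq0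
    hdist_cvg0 qt_mem qt_q).
by split=> // S [_ _ S_min]; exact: (S_min _ Aup_invariant Q_sub).
Qed.
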